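(* Let $G$ be an infinite abelian group and $(a_n)_{n\in\omega}$ a $T$-sequence in $G$. Then the coarse space $(G,\mathcal{S}_{\tau(a_n)})$ is metrizable if and only if $G$ is countable.
   Context: A sequence $(a_n)$ in an abelian group $G$ is a $T$-sequence if there is a Hausdorff group topology on $G$ in which $(a_n)\to0$; $\tau(a_n)$ is the strongest group topology on $G$ in which $(a_n)\to0$. $\mathcal{S}_{\tau}$ is the smallest group ideal on $G$ containing every set $\{x\}\cup\{x_n:n\in\omega\}$ with $x_n\to x$ in $(G,\tau)$; a group ideal (family of subsets containing all finite sets, closed under subsets and under $(A,B)\mapsto A-B$) defines the coarse structure on $G$ with base $\{\{(x,y):x\in A+y\}:A\in\mathcal{I}\}$. A coarse space is metrizable iff its coarse structure has a countable base (a subfamily such that every entourage is contained in a member of it). *)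

From HB Require Import structures.
From mathcomp Require Import all_boot all_order all_algebra.
Set Implicit Arguments. Unset Strict Implicit. Unset Printing Implicit Defensive.
Import GRing.Theory.
Local Open Scope ring_scope.

Definition is_topology (T : Type) (op : (T -> Prop) -> Prop) : Prop :=
  [/\ op (fun _ => True),
      (forall U V, op U -> op V -> op (fun x => U x /\ V x)) &
      (forall (F : (T -> Prop) -> Prop),
          (forall U, F U -> op U) -> op (fun x => exists2 U, F U & U x))].

(* Group topology on an abelian group: (x,y) |-> x - y is continuous
   (continuity w.r.t. the product topology, written out pointwise). *)
Definition group_topology (G : zmodType) (op : (G -> Prop) -> Prop) : Prop :=
  is_topology op /\
  forall (x y : G) (U : G -> Prop), op U -> U (x - y) ->
    exists V W, [/\ op V, V x, op W, W y &
                    forall v w, V v -> W w -> U (v - w)].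

Definition hausdorff (T : Type) (op : (T -> Prop) -> Prop) : Prop :=
  forall x y : T, x <> y ->
    exists U V, [/\ op U, op V, U x, V y & forall z, ~ (U z /\ V z)].

Definition converges (T : Type) (op : (T -> Prop) -> Prop)
    (u : nat -> T) (x : T) : Prop :=
  forall U, op U -> U x -> exists N, forall n, (N <= n)%N -> U (u n).

Definition T_sequence (G : zmodType) (a : nat -> G) : Prop :=
  exists op, [/\ group_topology op, hausdorff op & converges op a 0].

Definition is_tau (G : zmodType) (a : nat -> G) (op : (G -> Prop) -> Prop)
    : Prop :=
  [/\ group_topology op, converges op a 0 &
      forall op', group_topology op' -> converges op' a 0 ->
        forall U, op' U -> op U].

Definition finite_set (G : zmodType) (A : G -> Prop) : Prop :=
  exists s : seq G, forall x, A x -> x \in s.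

Definition set_sub (G : zmodType) (A B : G -> Prop) : G -> Prop :=
  fun z => exists a b, [/\ A a, B b & z = a - b].

Definition group_ideal (G : zmodType) (I : (G -> Prop) -> Prop) : Prop :=
  [/\ (forall A, finite_set A -> I A),
      (forall A B, I A -> (forall x, B x -> A x) -> I B) &
      (forall A B, I A -> I B -> I (set_sub A B))].

Definition conv_set (G : zmodType) (op : (G -> Prop) -> Prop) (A : G -> Prop)
    : Prop :=
  exists (u : nat -> G) (x : G), converges op u x /\
    (forall z, A z <-> (z = x \/ exists n, z = u n)).

Definition S_ideal (G : zmodType) (op : (G -> Prop) -> Prop) (A : G -> Prop)
    : Prop :=
  forall I, group_ideal I -> (forall B, conv_set op B -> I B) -> I A.

Definition ent_of (G : zmodType) (A : G -> Prop) : G -> G -> Prop :=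
  fun x y => exists2 a, A a & x = a + y.

Definition entourage (G : zmodType) (I : (G -> Prop) -> Prop)
    (E : G -> G -> Prop) : Prop :=
  exists2 A, I A & forall x y, E x y -> ent_of A x y.

(* Metrizable: the coarse structure has a countable base. *)
Definition coarse_metrizable (G : zmodType) (I : (G -> Prop) -> Prop) : Prop :=
  exists B : nat -> (G -> G -> Prop),
    (forall n, entourage I (B n)) /\
    (forall E, entourage I E -> exists n, forall x y, E x y -> B n x y).

Definition infinite_type (T : eqType) : Prop :=
  ~ exists s : seq T, forall x, x \in s.

Definition countable_type (T : Type) : Prop :=
  exists f : T -> nat, injective f.

(* Any group ideal generated by the sets {x} u {x_n} with x_n -> x consists of
   countable sets; as every singleton {g} gives the entourage {(g + y, y)}, a
   countable base B_n exhibits G as the countable union of the countable sets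
   B_n[0].  Conversely, let K_k be the set of sums of k elements of
   {0} u {+-a_n : n}.  In a Hausdorff group topology where a_n -> 0, K_k is
   compact, hence closed.  So if u_n -> x in tau(a_n) but u_n - x escaped every
   K_k, we could pick neighbourhoods V_j of 0 separating some u_n - x from K_j
   and tail indices m_j with A_(m_j) + A_(m_(j+1)) + ... inside V_j; the
   Protasov-Zelenyuk neighbourhood of 0 built from the m_j is tau-open and
   would miss infinitely many u_n - x.  Hence every member of S_tau lies in some
   F + K_k with F finite, and for G = {g_0, g_1, ...} the sets
   {g_0, ..., g_(n-1)} + K_n give a countable base. *)

From mathcomp Require Import all_boot all_order all_algebra.
From Stdlib Require Import ClassicalEpsilon.
Set Implicit Arguments. Unset Strict Implicit. Unset Printing Implicit Defensive.
Import GRing.Theory.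
Local Open Scope ring_scope.

Section SumSets.

Variables (G : zmodType) (a : nat -> G).

Definition pm_tail (n : nat) : G -> Prop :=
  fun c => c = 0 \/ exists2 j, (n <= j)%N & (c = a j \/ c = - a j).

Fixpoint seg_sums (m : nat -> nat) (i k : nat) : G -> Prop :=
  match k with
  | 0%N => fun x => x = 0
  | k'.+1 => fun x => exists c s, [/\ pm_tail (m i) c, seg_sums m i.+1 k' s & x = c + s]
  end.

Fixpoint ksums (k : nat) : G -> Prop :=
  match k with
  | 0%N => fun x => x = 0
  | k'.+1 => fun x => exists c s, [/\ pm_tail 0 c, ksums k' s & x = c + s]
  end.

Definition sums_nbhd (m : nat -> nat) : G -> Prop :=
  fun x => exists k, seg_sums m 0 k x.

Lemma pm_tail_mono n n' c : (n <= n')%N -> pm_tail n' c -> pm_tail n c.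
Proof.
move=> le [->|[j hj h]]; first by left.
by right; exists j => //; exact: leq_trans hj.
Qed.

Lemma pm_tail_opp n c : pm_tail n c -> pm_tail n (- c).
Proof.
case=> [->|[j hj [->|->]]]; first by left; rewrite oppr0.
- by right; exists j => //; right.
- by right; exists j => //; left; rewrite opprK.
Qed.

Lemma seg_sums0 m i k : seg_sums m i k 0.
Proof.
elim: k i => [|k IH] i //=.
by exists 0, 0; split=> //; [left | rewrite addr0].
Qed.

Lemma seg_sums_opp m i k x : seg_sums m i k x -> seg_sums m i k (- x).
Proof.
elim: k i x => [|k IH] i x /=; first by move=> ->; rewrite oppr0.
move=> [c [s [hc hs ->]]]; exists (- c), (- s); split.
- exact: pm_tail_opp.
- exact: IH.
- by rewrite opprD.
Qed.

Lemma seg_sums_mono m m' i k x :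
  (forall l, (m l <= m' l)%N) -> seg_sums m' i k x -> seg_sums m i k x.
Proof.
move=> le_m; elim: k i x => [|k IH] i x //=.
move=> [c [s [hc hs ->]]]; exists c, s; split=> //.
- exact: pm_tail_mono hc.
- exact: IH.
Qed.

Lemma seg_sums_ksums m i k x : seg_sums m i k x -> ksums k x.
Proof.
elim: k i x => [|k IH] i x //=.
move=> [c [s [hc hs ->]]]; exists c, s; split=> //.
- exact: pm_tail_mono hc.
- exact: IH hs.
Qed.

Lemma seg_sums_cat m i k k' x y :
  seg_sums m i k x -> seg_sums m (i + k) k' y -> seg_sums m i (k + k') (x + y).
Proof.
elim: k i x => [|k IH] i x /=; first by move=> ->; rewrite addn0 add0r.
move=> [c [s [hc hs ->]]] hy; exists c, (s + y); split=> //; last by rewrite addrA.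
by apply: IH => //; rewrite addSnnS.
Qed.

Lemma seg_sums_split m i k k' z :
  seg_sums m i (k + k') z ->
  exists x y, [/\ seg_sums m i k x, seg_sums m (i + k) k' y & z = x + y].
Proof.
elim: k i z => [|k IH] i z /=; first by rewrite addn0 => h; exists 0, z; rewrite add0r.
move=> [c [s [hc hs ->]]].
have [x [y [hx hy ->]]] := IH _ _ hs.
exists (c + x), y; split; first by exists c, x.
- by rewrite -addSnnS.
- by rewrite addrA.
Qed.

Lemma seg_sums_pad m i k k' x : (k <= k')%N -> seg_sums m i k x -> seg_sums m i k' x.
Proof.
move=> le hx; rewrite -(subnKC le) -[x]addr0; apply: seg_sums_cat hx _; exact: seg_sums0.
Qed.

Lemma seg_sums_shift m d j k y :
  seg_sums (fun i => m (d + i)%N) j k y -> seg_sums m (d + j) k y.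
Proof.
elim: k j y => [|k IH] j y //=.
move=> [c [s [hc hs ->]]]; exists c, s; split=> //.
by rewrite -addnS; exact: IH.
Qed.

(* The summands of p and q alternate in the result. *)
Lemma seg_sums_interleave m i k p q :
  seg_sums (fun l => maxn (m l.*2) (m l.*2.+1)) i k p ->
  seg_sums (fun l => maxn (m l.*2) (m l.*2.+1)) i k q ->
  seg_sums m i.*2 k.*2 (p + q).
Proof.
elim: k i p q => [|k IH] i p q /=; first by move=> -> ->; rewrite addr0.
move=> [c [s [hc hs ->]]] [d [t [hd ht ->]]].
exists c, (d + (s + t)); split.
- exact: pm_tail_mono (leq_maxl _ _) hc.
- exists d, (s + t); split=> //.
  + exact: pm_tail_mono (leq_maxr _ _) hd.
  + by rewrite -doubleS; exact: IH.
- by rewrite -!addrA (addrCA s).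
Qed.

Lemma ksums0 k : ksums k 0.
Proof. by elim: k => [|k IH] //=; exists 0, 0; split=> //; [left | rewrite addr0]. Qed.

Lemma ksums_opp k x : ksums k x -> ksums k (- x).
Proof.
elim: k x => [|k IH] x /=; first by move=> ->; rewrite oppr0.
move=> [c [s [hc hs ->]]]; exists (- c), (- s); split.
- exact: pm_tail_opp.
- exact: IH.
- by rewrite opprD.
Qed.

Lemma ksums_add k k' x y : ksums k x -> ksums k' y -> ksums (k + k') (x + y).
Proof.
elim: k x => [|k IH] x /=; first by move=> ->; rewrite add0r.
move=> [c [s [hc hs ->]]] hy; exists c, (s + y); split=> //; last by rewrite addrA.
exact: IH.
Qed.

Lemma ksums_mono k k' x : (k <= k')%N -> ksums k x -> ksums k' x.
Proof.
move=> le hx; rewrite -(subnKC le) -[x]addr0; apply: ksums_add hx _; exact: ksums0.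
Qed.

End SumSets.

Section SumsTopology.

Variables (G : zmodType) (a : nat -> G).

(* The group topology with neighbourhood base {x + sums_nbhd m : m} at x
   (Protasov-Zelenyuk). *)
Definition sums_open (O : G -> Prop) : Prop :=
  forall x, O x -> exists m, forall y, sums_nbhd a m y -> O (x + y).

Lemma sums_open_translate m x : sums_open (fun v => sums_nbhd a m (v - x)).
Proof.
move=> v [k hv]; exists (fun i => m (k + i)%N) => t [k' ht].
exists (k + k')%N; rewrite addrAC; apply: seg_sums_cat hv _.
by move: (seg_sums_shift ht); rewrite addn0.
Qed.

Lemma sums_open_group_topology : group_topology sums_open.
Proof.
split; first split.
- by move=> x _; exists (fun=> 0%N).
- move=> U V hU hV x [Ux Vx].
  have [m1 h1] := hU x Ux; have [m2 h2] := hV x Vx.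
  exists (fun i => maxn (m1 i) (m2 i)) => y [k hy]; split.
  + by apply: h1; exists k; apply: seg_sums_mono hy => l; exact: leq_maxl.
  + by apply: h2; exists k; apply: seg_sums_mono hy => l; exact: leq_maxr.
- move=> F hF x [U FU Ux].
  have [m hm] := hF U FU x Ux.
  by exists m => y hy; exists U => //; exact: hm.
move=> x y O hO Oxy.
have [m hm] := hO _ Oxy.
pose me l := maxn (m l.*2) (m l.*2.+1).
exists (fun v => sums_nbhd a me (v - x)), (fun w => sums_nbhd a me (w - y)).
split; [exact: sums_open_translate | by exists 0%N; rewrite subrr |
        exact: sums_open_translate | by exists 0%N; rewrite subrr | ].
move=> v w [k hv] [k' hw].
have hv' : seg_sums a me 0 (k + k') (v - x) by exact: seg_sums_pad (leq_addr _ _) hv.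
have hw' : seg_sums a me 0 (k + k') (- (w - y)).
  by apply: seg_sums_opp; exact: seg_sums_pad (leq_addl _ _) hw.
have := hm _ (ex_intro _ (k + k').*2 (seg_sums_interleave hv' hw')).
by rewrite opprB addrCA -[x - y + _]addrA addKr addrA addrNK.
Qed.

Lemma converges_sums_open : converges sums_open a 0.
Proof.
move=> U hU U0; have [m hm] := hU _ U0.
exists (m 0%N) => n hn; rewrite -[a n]add0r; apply: hm; exists 1%N.
exists (a n), 0; split=> //; last by rewrite addr0.
by right; exists n => //; left.
Qed.

End SumsTopology.

Section GroupTopology.

Variables (G : zmodType) (op : (G -> Prop) -> Prop).
Hypothesis gop : group_topology op.

Lemma open_setT : op (fun _ => True).
Proof. by case: gop => -[]. Qed.

Lemma open_setI U V : op U -> op V -> op (fun x => U x /\ V x).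
Proof. by case: gop => -[_ + _] _; apply. Qed.

Lemma nbhd0_sub Y : op Y -> Y 0 ->
  exists P Q, [/\ op P, P 0, op Q, Q 0 & forall p q, P p -> Q q -> Y (p - q)].
Proof.
case: gop => _ hsub oY Y0; have := hsub 0 0 Y oY; rewrite subrr => /(_ Y0).
by move=> [P [Q [? ? ? ? ?]]]; exists P, Q.
Qed.

Lemma converges_subr u x : converges op u x -> converges op (fun n => u n - x) 0.
Proof.
case: gop => _ hsub hu U oU U0.
have := hsub x x U oU; rewrite subrr => /(_ U0) [V [W [oV Vx oW Wx h]]].
have [N hN] := hu _ oV Vx; exists N => n hn; apply: h => //; exact: hN.
Qed.

Variable a : nat -> G.
Hypothesis a_to0 : converges op a 0.

Lemma eventually_pm P : op P -> P 0 ->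
  exists N, forall n, (N <= n)%N -> P (a n) /\ P (- a n).
Proof.
move=> oP P0.
have [P1 [Q1 [oP1 P10 oQ1 Q10 h]]] := nbhd0_sub oP P0.
have [N1 h1] := a_to0 oP P0; have [N2 h2] := a_to0 oQ1 Q10.
exists (maxn N1 N2) => n; rewrite geq_max => /andP [n1 n2]; split.
- exact: h1.
- by rewrite -sub0r; apply: h => //; exact: h2.
Qed.

Lemma nbhd_add_pm_tail Y : op Y -> Y 0 ->
  exists P N, [/\ op P, P 0 & forall q c, P q -> pm_tail a N c -> Y (q + c)].
Proof.
move=> oY Y0; have [P [Q [oP P0 oQ Q0 hPQ]]] := nbhd0_sub oY Y0.
have [N hN] := eventually_pm oQ Q0.
exists P, N; split=> // q c Pq [->|[n /hN [Qa Qna] [->|->]]].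
- by rewrite addr0 -[q]subr0; exact: hPQ.
- by rewrite -[a n]opprK; exact: hPQ.
- exact: hPQ.
Qed.

(* Build Y_j inside V_j with Y_(j+1) + pm_tail (m j) inside Y_j. *)
Lemma seg_sums_within (V : nat -> G -> Prop) :
  (forall j, op (V j) /\ V j 0) ->
  exists m, forall j L t, seg_sums a m j L t -> V j t.
Proof.
move=> oV.
have : forall Y, exists p : (G -> Prop) * nat, op Y -> Y 0 ->
    [/\ op p.1, p.1 0 & forall q c, p.1 q -> pm_tail a p.2 c -> Y (q + c)].
  move=> Y; case: (classic (op Y /\ Y 0)) => [[oY Y0] | nY].
    by have [P [N hPN]] := nbhd_add_pm_tail oY Y0; exists (P, N).
  by exists (fun _ => True, 0%N) => oY Y0; case: nY.
move=> /choice [step hstep].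
pose fix Y j := if j is j'.+1 then fun z => (step (Y j')).1 z /\ V j z else V 0%N.
have Yok : forall j, op (Y j) /\ Y j 0.
  elim=> [|j [oYj Yj0]]; first exact: oV.
  have [oS S0 _] := hstep _ oYj Yj0.
  by have [oVj Vj0] := oV j.+1; split; [exact: open_setI | split].
have YV : forall j z, Y j z -> V j z by case=> [|j] z //= [].
exists (fun j => (step (Y j)).2) => j L t ht; apply: YV.
elim: L j t ht => [|L IH] j t /=; first by move=> ->; exact: (Yok j).2.
move=> [c [s [hc /IH [hs _] ->]]]; rewrite addrC.
by have [oYj Yj0] := Yok j; have [_ _] := hstep _ oYj Yj0; apply.
Qed.

End GroupTopology.

Section KsumsClosed.

Variables (G : zmodType) (op : (G -> Prop) -> Prop) (a : nat -> G).
Hypotheses (gop : group_topology op) (hop : hausdorff op) (a_to0 : converges op a 0).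

Definition apart (S : G -> Prop) (v : G) : Prop :=
  exists V, [/\ op V, V 0 & forall s w, S s -> V w -> v <> s - w].

Lemma apart_finite S (f : nat -> G) M : (forall n, (n < M)%N -> apart S (f n)) ->
  exists V, [/\ op V, V 0 & forall n s w, (n < M)%N -> S s -> V w -> f n <> s - w].
Proof.
elim: M => [|M IH] hf; first by exists (fun _ => True); split=> //; exact: open_setT.
have [VM [oVM VM0 hVM]] := IH (fun n lt => hf n (ltnW lt)).
have [W [oW W0 hW]] := hf M (ltnSn M).
exists (fun x => VM x /\ W x); split=> //; first exact: open_setI.
move=> n s w; rewrite ltnS leq_eqVlt => /orP [/eqP -> | lt] Ss [VMw Ww].
- exact: hW.
- exact: hVM.
Qed.

(* ksums k is compact in op, hence closed: its complement is open. *)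
Lemma ksums_apart k v : ~ ksums a k v -> apart (ksums a k) v.
Proof.
elim: k v => [|k IH] v nS.
  have nv : - v <> 0 by move=> /eqP; rewrite oppr_eq0 => /eqP.
  have [U [V [oU oV Uv V0 dis]]] := hop nv.
  exists V; split=> // s w -> Vw ev; apply: (dis w); split=> //.
  by have -> : w = - v by rewrite ev sub0r opprK.
have nS_sub c : pm_tail a 0 c -> ~ ksums a k (v - c).
  by move=> hc h; apply: nS; exists c, (v - c); rewrite subrKC.
have nS_pm n : ~ ksums a k (v - a n) /\ ~ ksums a k (v + a n).
  split; first by apply: nS_sub; right; exists n => //; left.
  by rewrite -[a n]opprK; apply: nS_sub; right; exists n => //; right.
have [V0 [oV0 V00 hV0]] : apart (ksums a k) v.
  by apply: IH; rewrite -[v]subr0; apply: nS_sub; left.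
have [P [N [oP P0 hP]]] := nbhd_add_pm_tail gop a_to0 oV0 V00.
have [Vm [oVm Vm0 hVm]] :=
  apart_finite (f := fun n => v - a n) (M := N) (fun n _ => IH _ (nS_pm n).1).
have [Vp [oVp Vp0 hVp]] :=
  apart_finite (f := fun n => v + a n) (M := N) (fun n _ => IH _ (nS_pm n).2).
exists (fun x => P x /\ Vm x /\ Vp x).
split=> //; first by do 2 apply: open_setI => //.
move=> s w [c [s' [hc hs' ->]]] [Pw [Vmw Vpw]].
rewrite -addrA => ev.
case: hc => [c0 | [n _ hcn]].
  apply: (hV0 s' w hs'); last by rewrite ev c0 add0r.
  by rewrite -[w]addr0; apply: hP => //; left.
case: (ltnP n N) => [lt | ge].
  case: hcn ev => -> ev.
  - by apply: (hVm n s' w lt hs' Vmw); rewrite /= ev [a n + _]addrC addrK.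
  - by apply: (hVp n s' w lt hs' Vpw); rewrite /= ev [- a n + _]addrC subrK.
have hcN : pm_tail a N (- c) by apply: pm_tail_opp; right; exists n.
by apply: (hV0 s' (w - c) hs' (hP _ _ Pw hcN)); rewrite ev opprB addrCA.
Qed.

End KsumsClosed.

Lemma converges_tau_ksums (G : zmodType) (a : nat -> G) tau u x :
  T_sequence a -> is_tau a tau -> converges tau u x ->
  exists k N, forall n, (N <= n)%N -> ksums a k (u n - x).
Proof.
move=> [op [gop hop a_to0]] [gtau _ tau_max] /(converges_subr gtau) hv.
apply: NNPP => nK.
have : forall j, exists n, (j <= n)%N /\ ~ ksums a j (u n - x).
  move=> j; apply: NNPP => nj; apply: nK; exists j, j => n hn.
  by apply: NNPP => nS; apply: nj; exists n.
move=> /choice [g hg].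
have : forall j, exists V, [/\ op V, V 0 &
    forall s w, ksums a j s -> V w -> u (g j) - x <> s - w].
  by move=> j; apply: ksums_apart => //; exact: (hg j).2.
move=> /choice [V hV].
have [m hm] : exists m, forall j L t, seg_sums a m j L t -> V j t.
  by apply: (seg_sums_within gop a_to0) => j; have [] := hV j.
have tau_m : tau (fun v => sums_nbhd a m (v - 0)).
  apply: (tau_max (sums_open a)); first exact: sums_open_group_topology.
  - exact: converges_sums_open.
  - exact: sums_open_translate.
have [N hN] := hv _ tau_m (ex_intro _ 0%N (subrr 0)).
have [leN nS] := hg N; have [K] := hN _ leN; rewrite subr0.
case: (leqP K N) => [le | /ltnW lt] hK.
  by apply: nS; apply: ksums_mono le _; exact: seg_sums_ksums hK.
move: hK; rewrite -(subnKC lt) => /seg_sums_split [s [t [hs ht ev]]].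
have [_ _ hVN] := hV N.
apply: (hVN s (- t)); first exact: seg_sums_ksums hs.
- by apply: hm; apply: seg_sums_opp; exact: ht.
- by rewrite opprK ev.
Qed.

Section Ideals.

Variable G : zmodType.

Lemma S_ideal_group_ideal (op : (G -> Prop) -> Prop) : group_ideal (S_ideal op).
Proof.
split.
- by move=> A fA J [hfin _ _] _; exact: hfin.
- move=> A B hA BA J hJ hconv; have [_ hsub _] := hJ.
  exact: hsub (hA J hJ hconv) BA.
- move=> A B hA hB J hJ hconv; have [_ _ hdiff] := hJ.
  exact: hdiff (hA J hJ hconv) (hB J hJ hconv).
Qed.

Definition countable_set (A : G -> Prop) : Prop :=
  exists h : nat -> G, forall x, A x -> exists n, h n = x.

Lemma countable_set_ideal : group_ideal countable_set.
Proof.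
split.
- move=> A [s hs]; exists (nth 0 s) => x Ax.
  by exists (index x s); apply: nth_index; exact: hs.
- by move=> A B [h hh] sub; exists h => x /sub /hh.
move=> A B [h hh] [h' hh'].
exists (fun n => if unpickle n is Some (i, j) then h i - h' j else 0).
move=> z [x [y [Ax By ->]]].
have [i <-] := hh _ Ax; have [j <-] := hh' _ By.
by exists (pickle (i, j)); rewrite pickleK.
Qed.

Lemma S_ideal_countable (op : (G -> Prop) -> Prop) A :
  S_ideal op A -> countable_set A.
Proof.
apply; first exact: countable_set_ideal.
move=> B [u [x [_ hB]]].
exists (fun n => if n is n'.+1 then u n' else x) => z /hB [-> | [n ->]].
- by exists 0%N.
- by exists n.+1.
Qed.

Lemma surj_countable (T : Type) (F : nat -> T) :
  (forall x, exists k, F k = x) -> countable_type T.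
Proof. by move=> /choice [f hf]; exists f; exact: can_inj hf. Qed.

Lemma coarse_metrizable_countable (op : (G -> Prop) -> Prop) :
  coarse_metrizable (S_ideal op) -> countable_type G.
Proof.
move=> [B [entB baseB]].
have : forall n, exists h : nat -> G, forall g, B n g 0 -> exists k, h k = g.
  move=> n; have [A /S_ideal_countable [h hh] BA] := entB n.
  exists h => g /BA [c Ac ->]; rewrite addr0; exact: hh.
move=> /choice [H hH].
apply: (@surj_countable _ (fun k => if unpickle k is Some (n, j) then H n j else 0)) => g.
have [n hn] : exists n, forall x y, x = g + y -> B n x y.
  have [hfin _ _] := S_ideal_group_ideal op.
  apply: baseB; exists (fun z => z = g); last by move=> x y ->; exists g.
  by apply: hfin; exists [:: g] => z ->; exact: mem_head.
have [j hj] := hH n g (hn g 0 (esym (addr0 g))).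
by exists (pickle (n, j)); rewrite pickleK.
Qed.

End Ideals.

Section KsumBalls.

Variables (G : zmodType) (a : nat -> G).

Definition ksum_ball (s : seq G) (n : nat) : G -> Prop :=
  fun y => exists2 x, x \in s & ksums a n (y - x).

Definition ksum_bounded (A : G -> Prop) : Prop :=
  exists s n, forall y, A y -> ksum_ball s n y.

Lemma ksum_ball_mono s s' n n' y : {subset s <= s'} -> (n <= n')%N ->
  ksum_ball s n y -> ksum_ball s' n' y.
Proof. by move=> ss' le [x xs hx]; exists x; [exact: ss' | exact: ksums_mono hx]. Qed.

Lemma ksum_bounded_ideal : group_ideal ksum_bounded.
Proof.
split.
- move=> A [s hs]; exists s, 0%N => y /hs ys.
  by exists y; rewrite // subrr.
- by move=> A B [s [n hA]] BA; exists s, n => y /BA /hA.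
move=> A B [s [n hA]] [s' [n' hB]].
exists [seq x - x' | x <- s, x' <- s'], (n + n')%N.
move=> z [y [y' [/hA [x xs hx] /hB [x' xs' hx'] ->]]].
exists (x - x'); first exact: allpairs_f.
have -> : y - y' - (x - x') = (y - x) - (y' - x') by rewrite !opprD addrACA.
by apply: ksums_add hx _; exact: ksums_opp.
Qed.

Lemma S_ideal_ksum_bounded tau A :
  T_sequence a -> is_tau a tau -> S_ideal tau A -> ksum_bounded A.
Proof.
move=> hT htau; apply; first exact: ksum_bounded_ideal.
move=> B [u [x [hux hB]]].
have [k [N hN]] := converges_tau_ksums hT htau hux.
exists (x :: [seq u i | i <- iota 0 N]), k => z /hB [-> | [i ->]].
  by exists x; rewrite ?mem_head // subrr; exact: ksums0.
case: (leqP N i) => [le | lt].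
  by exists x; [exact: mem_head | exact: hN].
exists (u i); last by rewrite subrr; exact: ksums0.
by rewrite inE map_f ?orbT // mem_iota.
Qed.

Lemma ksums_S_ideal tau k : converges tau a 0 -> S_ideal tau (ksums a k).
Proof.
move=> a_to0 J [hfin hsub hdiff] hconv.
pose A0 c := c = 0 \/ exists n, c = a n.
have JA0 : J A0 by apply: hconv; exists a, 0.
have JA : J (pm_tail a 0).
  apply: hsub (hdiff _ _ JA0 JA0) _ => c [-> | [n _ [-> | ->]]].
  - by exists 0, 0; rewrite subr0; split=> //; left.
  - by exists (a n), 0; rewrite subr0; split=> //; [right; exists n | left].
  - by exists 0, (a n); rewrite sub0r; split=> //; [left | right; exists n].
elim: k => [|k IH]; first by apply: hfin; exists [:: 0] => x ->; exact: mem_head.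
apply: hsub (hdiff _ _ IH JA) _ => y [c [s [hc hs ->]]].
exists s, (- c); split=> //; first exact: pm_tail_opp.
by rewrite opprK addrC.
Qed.

Lemma ksum_ball_S_ideal tau s n : converges tau a 0 -> S_ideal tau (ksum_ball s n).
Proof.
move=> a_to0; have [hfin hsub hdiff] := S_ideal_group_ideal tau.
have hs : S_ideal tau (fun w => - w \in s).
  by apply: hfin; exists (map -%R s) => w /(map_f -%R); rewrite opprK.
apply: hsub (hdiff _ _ (ksums_S_ideal n a_to0) hs) _ => y [x xs hx].
by exists (y - x), (- x); rewrite opprK subrK.
Qed.

End KsumBalls.

Lemma injective_cancel (T : Type) (t0 : T) (f : T -> nat) :
  injective f -> exists e, cancel f e.
Proof.
move=> finj; exists (fun n => epsilon (inhabits t0) (fun x => f x = n)) => x.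
by apply: finj; apply: (epsilon_spec (inhabits t0) (fun y => f y = f x)); exists x.
Qed.

Lemma countable_coarse_metrizable (G : zmodType) (a : nat -> G) tau :
  T_sequence a -> is_tau a tau -> countable_type G -> coarse_metrizable (S_ideal tau).
Proof.
move=> hT htau [f /(injective_cancel 0) [e fK]].
have [_ a_to0 _] := htau.
exists (fun n => ent_of (ksum_ball a [seq e i | i <- iota 0 n] n)); split.
  by move=> n; exists (ksum_ball a [seq e i | i <- iota 0 n] n) => //; exact: ksum_ball_S_ideal.
move=> E [A /(S_ideal_ksum_bounded hT htau) [s [n hA]] hE].
pose N := maxn n (\max_(x <- s) f x).+1.
exists N => x y /hE [z /hA Az ->]; exists z => //.
apply: ksum_ball_mono Az; last exact: leq_maxl.
move=> w ws; rewrite -[w]fK map_f // mem_iota add0n /N leq_max ltnS.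
by rewrite (leq_bigmax_seq (F := f) w ws) ?orbT.
Qed.

Theorem theorem7 (G : zmodType) (a : nat -> G)
    (tau : (G -> Prop) -> Prop) :
  infinite_type G -> T_sequence a -> is_tau a tau ->
  (coarse_metrizable (S_ideal tau) <-> countable_type G).
Proof.
move=> _ hT htau; split; first exact: coarse_metrizable_countable.
exact: countable_coarse_metrizable hT htau.
Qed.
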